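(* There exist absolute constants $c>0$ and $n_0$ such that for every $n\ge n_0$, every $\epsilon\in(3\ln n/n,\,1/12)$, and every $\epsilon$-differentially private algorithm $M$ that takes as input a graph on a fixed vertex set $V$ with $|V|=n$ and outputs a cut $(S,V\setminus S)$ with $\emptyset\ne S\subsetneq V$, there exists a graph $G=(V,E)$ such that $\mathbb{E}[\mathrm{Cost}(G,M(G))]\ge \mathrm{OPT}(G)+c\ln n/\epsilon$.
   Context: A randomized algorithm $M$ on graphs with vertex set $V$ is $\epsilon$-differentially private if for any two edge sets $E,E'$ on $V$ whose symmetric difference has size one and any set $\mathcal{O}$ of outputs, $\Pr[M(V,E)\in\mathcal{O}]\le e^{\epsilon}\Pr[M(V,E')\in\mathcal{O}]$. For a graph $G$ and cut $(S,V\setminus S)$, $\mathrm{Cost}(G,(S,V\setminus S))$ is the number of edges of $G$ with exactly one endpoint in $S$, and $\mathrm{OPT}(G)$ is the minimum of this quantity over all $\emptyset\ne S\subsetneq V$. *)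

From Stdlib Require Import Reals.
From HB Require Import structures.
From mathcomp Require Import all_boot all_order all_algebra.
From mathcomp Require Import Rstruct.
Set Implicit Arguments. Unset Strict Implicit. Unset Printing Implicit Defensive.
Import Order.TTheory GRing.Theory Num.Theory.
Local Open Scope ring_scope.

Definition is_graph (n : nat) (E : {set {set 'I_n}}) : bool :=
  [forall e in E, #|e| == 2]%N.

Definition is_cut (n : nat) (S : {set 'I_n}) : bool :=
  (S != set0) && (S != setT).

Definition cut_cost (n : nat) (E : {set {set 'I_n}}) (S : {set 'I_n}) : nat :=
  #|[set e in E | #|e :&: S| == 1%N]|.

(* OPT(G): minimum of cut_cost over all nonempty proper S
   (the seed #|E| is an upper bound on every cut cost). *)
Definition OPT (n : nat) (E : {set {set 'I_n}}) : nat :=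
  \big[minn/#|E|]_(S : {set 'I_n} | is_cut S) cut_cost E S.

Definition cut_algorithm (n : nat) (M : {set {set 'I_n}} -> {ffun {set 'I_n} -> R}) : Prop :=
  forall E : {set {set 'I_n}}, is_graph E ->
    (forall S, 0 <= M E S) /\ (\sum_(S : {set 'I_n}) M E S = 1) /\
    (forall S, ~~ is_cut S -> M E S = 0).

Definition prob_in (n : nat) (M : {set {set 'I_n}} -> {ffun {set 'I_n} -> R})
  (E : {set {set 'I_n}}) (O : {set {set 'I_n}}) : R :=
  \sum_(S in O) M E S.

Definition edge_dp (n : nat) (eps : R) (M : {set {set 'I_n}} -> {ffun {set 'I_n} -> R}) : Prop :=
  forall E E' : {set {set 'I_n}}, is_graph E -> is_graph E' ->
    #|(E :\: E') :|: (E' :\: E)| = 1%N ->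
    forall O : {set {set 'I_n}}, prob_in M E O <= exp eps * prob_in M E' O.

Definition expected_cost (n : nat) (M : {set {set 'I_n}} -> {ffun {set 'I_n} -> R})
  (E : {set {set 'I_n}}) : R :=
  \sum_(S : {set 'I_n}) M E S * (cut_cost E S)%:R.

From Stdlib Require Import Reals.
From mathcomp Require Import all_boot all_order all_algebra.
From mathcomp Require Import Rstruct.
From mathcomp Require Import zify lra.
Import Order.TTheory GRing.Theory Num.Theory.

(* Let G_i be the complete graph on V with the k edges from vertex i to k other
   vertices removed, k ~ ln n / (2 eps).  In G_i the cut {i} is optimal, of cost
   n - 1 - k, while every cut other than {i} and its complement costs at least
   n - 2.  Each G_i is k edge changes away from K_n, so by group privacy M(G_i)
   outputs {i} or its complement with probability at most e^(eps k) times the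
   probability that M(K_n) does; these events are disjoint for different i, so
   for some i that probability is at most e^(eps k) / n <= 1 / sqrt n <= 1/2.
   On that G_i the algorithm pays about (k - 1)/2 >= ln n / (6 eps) more than
   OPT in expectation. *)

Lemma exists_subset_card {T : finType} {A : {set T}} {k} : (k <= #|A|)%N ->
  exists2 B : {set T}, B \subset A & #|B| = k.
Proof.
elim: k => [|k IHk] kA; first by exists set0; rewrite ?sub0set ?cards0.
have [B sBA cardB] := IHk (ltnW kA).
have : B \proper A by rewrite properEcard sBA cardB.
case/properP => _ [x xA xB]; exists (x |: B); first by rewrite subUset sub1set xA.
by rewrite cardsU1 xB cardB.
Qed.

Lemma card_gt1_neq_set1 {T : finType} {A : {set T}} {x : T} :
  x \in A -> A != [set x] -> (1 < #|A|)%N.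
Proof.
move=> xA; apply: contraNT; rewrite -leqNgt => cardA.
have /cards1P[y Ay] : #|A| == 1%N by rewrite eqn_leq cardA card_gt0; apply/set0Pn; exists x.
by move: xA; rewrite Ay inE => /eqP ->.
Qed.

Section Cuts.
Context {n : nat}.
Implicit Types (S T : {set 'I_n}) (E F : {set {set 'I_n}}).

Definition pair_edge (p : 'I_n * 'I_n) : {set 'I_n} := [set p.1; p.2].

Definition crossing F S := [set p in setX S (~: S) | pair_edge p \in F].

Lemma pair_edge_inj S : {in setX S (~: S) &, injective pair_edge}.
Proof.
move=> [a b] [c d]; rewrite !inE /= => /andP[aS bS] /andP[cS dS] /setP eq_ab_cd.
have := eq_ab_cd a; rewrite !inE eqxx /= => /esym /orP[/eqP ac | /eqP ad].
- have := eq_ab_cd b; rewrite !inE eqxx orbT /= => /esym /orP[/eqP bc | /eqP bd].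
  + by rewrite bc cS in bS.
  + by rewrite ac bd.
- by rewrite ad (negbTE dS) in aS.
Qed.

Lemma card_crossing_edges F S : #|pair_edge @: crossing F S| = #|crossing F S|.
Proof.
apply: card_in_imset => p q; rewrite !inE => /andP[pS _] /andP[qS _].
by apply: (@pair_edge_inj S); rewrite !inE.
Qed.

Lemma card_set2I x y S : x != y -> #|[set x; y] :&: S| = ((x \in S) + (y \in S))%N.
Proof.
move=> xy; have set1I z : [set z] :&: S = if z \in S then [set z] else set0.
  by apply/setP => w; case: ifP => zS; rewrite !inE; case: (w =P z) => [->|] //=; rewrite zS.
rewrite setIUl !set1I.
by case: (x \in S); case: (y \in S); rewrite ?setU0 ?set0U ?cards0 ?cards1 ?cards2 ?xy.
Qed.

Lemma cut_edges_crossing E S : is_graph E ->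
  [set e in E | #|e :&: S| == 1%N] = pair_edge @: crossing E S.
Proof.
move=> /forall_inP graphE; apply/setP => e; rewrite inE; apply/andP/imsetP.
- move=> [eE]; have /cards2P[x [y [xy e_xy]]] := graphE e eE; subst e.
  rewrite card_set2I //; case xS: (x \in S); case yS: (y \in S) => //= _.
  + by exists (x, y); rewrite // !inE /= xS yS eE.
  + exists (y, x); last by rewrite /pair_edge setUC.
    by rewrite !inE /= xS yS /pair_edge /= setUC eE.
- move=> [[a b]]; rewrite !inE /= => /andP[/andP[aS bS] abE] ->; split=> //.
  have ab : a != b by apply: contraNneq bS => <-.
  by rewrite card_set2I // aS (negbTE bS).
Qed.

Lemma cut_cost_crossing E S : is_graph E -> cut_cost E S = #|crossing E S|.
Proof. by move=> graphE; rewrite /cut_cost cut_edges_crossing // card_crossing_edges. Qed.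

Definition complete_graph : {set {set 'I_n}} := [set e : {set 'I_n} | #|e| == 2].

Definition star (i : 'I_n) T : {set {set 'I_n}} := [set [set i; t] | t in T].

Definition star_deleted i T := complete_graph :\: star i T.

Lemma card_star_deleted_complement i T : #|complete_graph :\: star_deleted i T| <= #|T|.
Proof.
rewrite setDDr setDv set0U; apply: leq_trans (subset_leq_card (subsetIr _ _)) _.
exact: leq_imset_card.
Qed.

Lemma is_graph_complete_minus F : is_graph (complete_graph :\: F).
Proof. by apply/forall_inP => e; rewrite !inE => /andP[]. Qed.

Lemma is_graph_complete : is_graph complete_graph.
Proof. by apply/forall_inP => e; rewrite inE. Qed.

Lemma cut_cost_complete_minus F S :
  cut_cost (complete_graph :\: F) S + #|crossing F S| = #|S| * #|~: S|.
Proof.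
rewrite cut_cost_crossing ?is_graph_complete_minus // -cardsX.
rewrite -[RHS](cardsID (crossing F S)) addnC; congr (_ + _); apply: eq_card => -[a b].
- by rewrite !inE /=; case: (a \in S); case: (b \in S); case: (pair_edge _ \in F).
- rewrite !inE /=; case aS: (a \in S); case bS: (b \in S) => //=.
  have ab : a != b by apply: contraFneq bS => <-.
  by rewrite /pair_edge cards2 ab andbT.
Qed.

Lemma crossing_star_mem {i T S p} : p \in crossing (star i T) S -> (p.1 == i) || (p.2 == i).
Proof.
rewrite inE => /andP[_ /imsetP[t _ p_it]].
have : i \in pair_edge p by rewrite p_it !inE eqxx.
by rewrite !inE orbC; case/orP => /eqP ->; rewrite eqxx ?orbT.
Qed.

Lemma card_crossing_star i T S : #|crossing (star i T) S| <= #|T|.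
Proof.
rewrite -card_crossing_edges; apply: leq_trans (leq_imset_card (fun t => [set i; t]) T).
by apply/subset_leq_card/subsetP => e /imsetP[p]; rewrite inE => /andP[_ pE] ->.
Qed.

Lemma card_crossing_star_in i T S : i \in S -> #|crossing (star i T) S| <= #|~: S|.
Proof.
move=> iS; rewrite -[#|~: S|]mul1n -(cards1 i) -cardsX; apply/subset_leq_card/subsetP.
move=> p pX; case/orP: (crossing_star_mem pX) => /eqP pi; move: pX; rewrite !inE pi.
- by move=> /andP[/andP[_ ->] _]; rewrite eqxx.
- by rewrite iS andbF.
Qed.

Lemma card_crossing_star_notin i T S : i \notin S -> #|crossing (star i T) S| <= #|S|.
Proof.
move=> iS; rewrite -[#|S|]muln1 -(cards1 i) -cardsX; apply/subset_leq_card/subsetP.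
move=> p pX; case/orP: (crossing_star_mem pX) => /eqP pi; move: pX; rewrite !inE pi.
- by rewrite (negbTE iS).
- by move=> /andP[/andP[-> _] _]; rewrite eqxx.
Qed.

Lemma card_crossing_star_set1 {i T} : T \subset ~: [set i] ->
  #|T| <= #|crossing (star i T) [set i]|.
Proof.
move=> sTi; rewrite -[#|T|]mul1n -(cards1 i) -cardsX; apply/subset_leq_card/subsetP.
move=> [a b]; rewrite !inE /= => /andP[/eqP -> bT].
have := subsetP sTi b bT; rewrite !inE => -> /=.
by rewrite eqxx; apply/imsetP; exists b.
Qed.

End Cuts.

Lemma is_cut_cards n (S : {set 'I_n}) :
  is_cut S -> [/\ 0 < #|S|, 0 < #|~: S| & #|S| + #|~: S| = n].
Proof.
case/andP => S0 ST; rewrite !card_gt0 S0 cardsC card_ord; split=> //.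
by apply: contra ST => /eqP S_T; rewrite -(setCK S) S_T setC0.
Qed.

(* [minn] is convertible to [Order.min] on [nat], so [OPT] is an order-theoretic [bigmin]. *)
Lemma OPT_le_cut_cost n (E : {set {set 'I_n}}) S : is_cut S -> OPT E <= cut_cost E S.
Proof. by move=> cutS; exact: (@bigmin_le_cond _ nat _ _ _ _ _ cutS). Qed.

Lemma is_cut_set1 n (j : 'I_n) : 1 < n -> is_cut [set j].
Proof.
move=> n_gt1; rewrite /is_cut -card_gt0 cards1 /=.
by apply: contraTneq n_gt1 => jT; have := cards1 j; rewrite jT cardsT card_ord => ->.
Qed.

Section StarDeleted.
Context {n : nat} {i : 'I_n} {T : {set 'I_n}}.

Lemma star_deleted_cut_cost_ge S :
  is_cut S -> n <= cut_cost (star_deleted i T) S + #|T| + 1.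
Proof.
case/is_cut_cards => S0 SC0 cardSC.
have := cut_cost_complete_minus (star i T) S; have := card_crossing_star i T S.
rewrite /star_deleted; nia.
Qed.

Lemma star_deleted_cut_cost_ge_far S : is_cut S -> S != [set i] -> S != ~: [set i] ->
  n <= cut_cost (star_deleted i T) S + 2.
Proof.
case/is_cut_cards => S0 SC0 cardSC S_i SC_i.
have := cut_cost_complete_minus (star i T) S; rewrite /star_deleted.
have [iS | iSC] := boolP (i \in S).
- have := card_crossing_star_in i T _ iS; have := card_gt1_neq_set1 iS S_i.
  move: cardSC; set c := cut_cost _ _; set s := #|S|; set t := #|~: S|; nia.
- have := card_crossing_star_notin i T _ iSC.
  have iSC' : i \in ~: S by rewrite inE.
  have : ~: S != [set i] by apply: contra SC_i => /eqP <-; rewrite setCK.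
  move=> /(card_gt1_neq_set1 iSC').
  move: cardSC; set c := cut_cost _ _; set s := #|S|; set t := #|~: S|; nia.
Qed.

Lemma OPT_star_deleted :
  T \subset ~: [set i] -> 1 < n -> OPT (star_deleted i T) + #|T| + 1 <= n.
Proof.
move=> sTi n_gt1; apply: leq_trans (_ : cut_cost (star_deleted i T) [set i] + #|T| + 1 <= n).
  by rewrite !leq_add2r OPT_le_cut_cost ?is_cut_set1.
have := cut_cost_complete_minus (star i T) [set i].
have := card_crossing_star_set1 sTi.
rewrite cards1 cardsC1 card_ord mul1n /star_deleted -subn1.
set c := cut_cost _ _; set x := #|crossing _ _|; lia.
Qed.

End StarDeleted.

Local Open Scope ring_scope.

Lemma ler_exp (x y : R) : x <= y -> exp x <= exp y.
Proof.
rewrite le_eqVlt => /orP[/eqP -> // | /RltP x_lt_y].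
exact/ltW/RltP/exp_increasing.
Qed.

Lemma exp_ge1 {x : R} : 0 <= x -> 1 <= exp x.
Proof. by move=> /ler_exp; rewrite exp_0. Qed.

Lemma exp_mulrn (x : R) k : exp (x *+ k) = exp x ^+ k.
Proof.
elim: k => [|k IHk]; first by rewrite mulr0n exp_0.
by rewrite mulrS exprS -IHk exp_plus.
Qed.

Lemma is_graph_subset {n} {E E' : {set {set 'I_n}}} :
  E' \subset E -> is_graph E -> is_graph E'.
Proof.
move=> sE'E /forall_inP graphE; apply/forall_inP => e eE'.
exact: graphE (subsetP sE'E e eE').
Qed.

Lemma edge_dp_subset {n} {eps : R} {M : {set {set 'I_n}} -> {ffun {set 'I_n} -> R}}
    {E E' : {set {set 'I_n}}} O :
  edge_dp eps M -> is_graph E -> E' \subset E ->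
  prob_in M E' O <= exp eps ^+ #|E :\: E'| * prob_in M E O.
Proof.
move=> dpM graphE sE'E; have [m cardD] : exists m, #|E :\: E'| = m by exists #|E :\: E'|.
rewrite cardD; elim: m E' sE'E cardD => [|m IHm] E' sE'E cardD.
  suff -> : E' = E by rewrite expr0 mul1r.
  by apply/eqP; rewrite eqEsubset sE'E -setD_eq0 -cards_eq0 cardD.
have [e eD] : exists e, e \in E :\: E' by apply/set0Pn; rewrite -card_gt0 cardD.
have /andP[eE' eE] : (e \notin E') && (e \in E) by rewrite -in_setD.
have sE'eE : e |: E' \subset E by rewrite subUset sub1set eE sE'E.
have cardDe : #|E :\: (e |: E')| = m.
  by apply/succn_inj; rewrite -cardD (cardsD1 e (E :\: E')) eD setDDl setUC.
have neighbours : #|(E' :\: (e |: E')) :|: ((e |: E') :\: E')| = 1%N.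
  rewrite -(cards1 e); apply: eq_card => x; rewrite !inE.
  by case: (x =P e) => [->|]; rewrite ?(negbTE eE') ?orbF ?andbF //=; case: (x \in E').
have graphE' := is_graph_subset sE'E graphE; have graphE'e := is_graph_subset sE'eE graphE.
apply: le_trans (dpM _ _ graphE' graphE'e neighbours O) _.
rewrite exprS -mulrA; apply: ler_wpM2l; [exact/ltW/RltP/exp_pos | exact: IHm].
Qed.

Definition singleton_cuts {n} (i : 'I_n) : {set {set 'I_n}} := [set [set i]; ~: [set i]].

Section ExpectedCost.
Context {n : nat} {M : {set {set 'I_n}} -> {ffun {set 'I_n} -> R}}.
Hypothesis cutM : cut_algorithm M.

Lemma expected_cost_ge {E O : {set {set 'I_n}}} {k} : is_graph E ->
  (forall S, is_cut S -> (n <= cut_cost E S + k + 1)%N) ->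
  (forall S, is_cut S -> S \notin O -> (n <= cut_cost E S + 2)%N) ->
  n%:R - 2 - (k%:R - 1) * prob_in M E O <= expected_cost M E.
Proof.
move=> graphE cost_ge cost_ge_off; have [M_ge0 [M_sum1 M_cut]] := cutM _ graphE.
rewrite /expected_cost /prob_in big_mkcond mulr_sumr /=.
have -> : n%:R - 2 = \sum_S M E S * (n%:R - 2) by rewrite -mulr_suml M_sum1 mul1r.
rewrite -sumrB; apply: ler_sum => S _; have M_S := M_ge0 S.
have [cutS|/M_cut->] := boolP (is_cut S); last by rewrite !mul0r if_same mulr0 subr0.
case: ifP => SO.
- by have := cost_ge S cutS; rewrite -(ler_nat R) !natrD; nra.
- have := cost_ge_off S cutS (negbT SO); rewrite -(ler_nat R) !natrD mulr0 subr0; nra.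
Qed.

Lemma star_deleted_expected_cost_ge (i : 'I_n) (T : {set 'I_n}) :
  (1 < n)%N -> T \subset ~: [set i] ->
  (OPT (star_deleted i T))%:R
    + (#|T|%:R - 1) * (1 - prob_in M (star_deleted i T) (singleton_cuts i))
  <= expected_cost M (star_deleted i T).
Proof.
move=> n_gt1 sTi; have := OPT_star_deleted sTi n_gt1; rewrite -(ler_nat R) !natrD.
have cost_ge_off S : is_cut S -> S \notin singleton_cuts i ->
    (n <= cut_cost (star_deleted i T) S + 2)%N.
  by move=> cutS; rewrite !inE negb_or => /andP[]; exact: star_deleted_cut_cost_ge_far.
have := expected_cost_ge (is_graph_complete_minus (star i T))
  (@star_deleted_cut_cost_ge _ i T) cost_ge_off.
rewrite /star_deleted; lra.
Qed.

Lemma sum_prob_singleton_cuts_le1 {E} : (2 < n)%N -> is_graph E ->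
  \sum_(i : 'I_n) prob_in M E (singleton_cuts i) <= 1.
Proof.
move=> n_gt2 graphE; have [M_ge0 [M_sum1 _]] := cutM _ graphE.
rewrite /prob_in -partition_disjoint_bigcup.
  by rewrite -M_sum1 [X in _ <= X](bigID (mem (\bigcup_i singleton_cuts i))) /= lerDl sumr_ge0.
move=> i j ij; rewrite -setI_eq0; apply/eqP/setP => S; rewrite !inE.
have set1_neqC (x y : 'I_n) : [set x] != ~: [set y].
  by apply/eqP => eq_xy; have := cards1 x; rewrite eq_xy cardsC1 card_ord; lia.
apply/negP => /andP[/orP[]/eqP-> /orP[]/eqP].
- by move/set1_inj/eqP; rewrite (negbTE ij).
- by apply/eqP; rewrite set1_neqC.
- by apply/eqP; rewrite eq_sym set1_neqC.
- by move/setC_inj/set1_inj/eqP; rewrite (negbTE ij).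
Qed.

End ExpectedCost.

Lemma exists_le_mean (F : realFieldType) n (f : 'I_n -> F) b : (0 < n)%N ->
  \sum_i f i <= b -> exists i, f i * n%:R <= b.
Proof.
move=> n_gt0 sum_le; have [/existsP//|/existsPn f_gt] := boolP [exists i, f i * n%:R <= b].
have : b * n%:R < (\sum_i f i) * n%:R.
  rewrite mulr_suml -[n in b * n%:R](card_ord n) mulr_natr -sumr_const.
  apply: ltr_sum => [|i _]; last by rewrite ltNge f_gt.
  by apply/hasP; exists (Ordinal n_gt0); rewrite ?mem_index_enum.
by rewrite ltr_pM2r ?ltr0n // ltNge sum_le.
Qed.

Lemma exists_rare_singleton_cut n (eps : R) (M : {set {set 'I_n}} -> {ffun {set 'I_n} -> R})
    (G : 'I_n -> {set {set 'I_n}}) k :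
  (2 < n)%N -> 0 <= eps -> cut_algorithm M -> edge_dp eps M ->
  (forall i, G i \subset complete_graph) ->
  (forall i, #|complete_graph :\: G i| <= k)%N ->
  exists i, prob_in M (G i) (singleton_cuts i) * n%:R <= exp eps ^+ k.
Proof.
move=> n_gt2 eps_ge0 cutM dpM sGK cardD; apply: exists_le_mean; first lia.
apply: le_trans (_ : \sum_i exp eps ^+ k * prob_in M complete_graph (singleton_cuts i) <= _).
  apply: ler_sum => i _; apply: le_trans (edge_dp_subset _ dpM is_graph_complete (sGK i)) _.
  apply: ler_wpM2r; first by apply: sumr_ge0 => S _; case: (cutM _ is_graph_complete).
  exact: ler_weXn2l (exp_ge1 eps_ge0) _ _ (cardD i).
have exp_ge0 : 0 <= exp eps ^+ k by rewrite exprn_ge0 // (le_trans ler01 (exp_ge1 eps_ge0)).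
rewrite -mulr_sumr -[X in _ <= X]mulr1 ler_wpM2l //.
by have := sum_prob_singleton_cuts_le1 cutM n_gt2 is_graph_complete.
Qed.

Lemma ln_ge1 (x : R) : 3 < x -> 1 <= ln x.
Proof.
move=> x_gt3; rewrite -[1](ln_exp 1); apply/ltW/RltP/ln_increasing; first exact: exp_pos.
by apply/RltP; apply: le_lt_trans x_gt3; apply/RleP/exp_le_3.
Qed.

Lemma le_half_of_mul_le_sqrt (F : realFieldType) (p y x : F) :
  p * x <= y -> y * y <= x -> 0 <= y -> 4 <= x -> p <= 1 / 2.
Proof.
move=> pxy yyx y_ge0 x_ge4; rewrite leNgt; apply/negP => p_gt.
have : x / 2 < y by nra.
nra.
Qed.

(* The number of deleted star edges: small enough that e^(2 eps k) <= n, so that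
   some singleton cut is rare, and large enough that missing it costs ~ k/2. *)
Definition star_size (n : nat) (eps : R) : nat := Num.truncn (ln n%:R / (2 * eps)).

Lemma star_size_mulr_eps {n} {eps : R} : 0 < eps -> 1 <= ln n%:R ->
  (star_size n eps)%:R * (2 * eps) <= ln n%:R < ((star_size n eps)%:R + 1) * (2 * eps).
Proof.
move=> eps_gt0 ln_ge1; have a_ge0 : 0 <= ln n%:R / (2 * eps) by apply: divr_ge0; lra.
have := truncn_itv a_ge0; rewrite -/(star_size n eps) -natr1.
by rewrite ler_pdivlMr ?ltr_pdivrMr //; lra.
Qed.

Lemma star_size_lt n (eps : R) : (0 < n)%N -> 1 <= ln n%:R ->
  3 * ln n%:R / n%:R < eps -> (star_size n eps < n)%N.
Proof.
move=> n_gt0 ln_ge1 eps_big; have n_pos : 0 < n%:R :> R by rewrite ltr0n.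
rewrite ltr_pdivrMr // in eps_big.
have eps_gt0 : 0 < eps by nra.
have [k_le _] := andP (star_size_mulr_eps eps_gt0 ln_ge1).
rewrite -(ltr_nat R); nra.
Qed.

Lemma exp_star_size_sq n (eps : R) : (0 < n)%N -> 0 < eps -> 1 <= ln n%:R ->
  exp eps ^+ star_size n eps * exp eps ^+ star_size n eps <= n%:R.
Proof.
move=> n_gt0 eps_gt0 ln_ge1; have [k_le _] := andP (star_size_mulr_eps eps_gt0 ln_ge1).
rewrite -exprD -exp_mulrn -[X in _ <= X]exp_ln; last by apply/RltP; rewrite ltr0n.
by apply: ler_exp; rewrite mulrnDr -(mulr_natl eps); lra.
Qed.

Lemma star_size_gain n (eps p : R) : 0 < eps -> eps < 1 / 12 -> 1 <= ln n%:R ->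
  0 <= p <= 1 / 2 -> 1 / 6 * ln n%:R / eps <= ((star_size n eps)%:R - 1) * (1 - p).
Proof.
move=> eps_gt0 eps_small ln_ge1 /andP[p_ge0 p_le].
have /andP[k_le k_gt] := star_size_mulr_eps eps_gt0 ln_ge1.
rewrite ler_pdivrMr //; nra.
Qed.

Theorem mainTheorem2 :
  exists (c : R) (n0 : nat), 0 < c /\
    forall (n : nat), (n0 <= n)%N ->
    forall (eps : R), 3 * ln n%:R / n%:R < eps -> eps < 1 / 12 ->
    forall M : {set {set 'I_n}} -> {ffun {set 'I_n} -> R},
      cut_algorithm M -> edge_dp eps M ->
      exists E : {set {set 'I_n}}, is_graph E /\
        (OPT E)%:R + c * ln n%:R / eps <= expected_cost M E.
Proof.
exists (1 / 6), 20%N; split; first lra.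
move=> n n_ge20 eps eps_big eps_small M cutM dpM.
have n_gt0 : (0 < n)%N by lia.
have ln_ge1 : 1 <= ln n%:R by apply: ln_ge1; rewrite (ltr_nat R 3); lia.
have eps_gt0 : 0 < eps.
  by apply: lt_trans eps_big; rewrite !mulr_gt0 ?invr_gt0 ?ltr0n //; lra.
set k := star_size n eps.
have k_le (i : 'I_n) : (k <= #|~: [set i]|)%N.
  by rewrite cardsC1 card_ord -ltnS prednK // star_size_lt.
have [T T_sub T_card] := fin_all_exists2 (fun i => exists_subset_card (k_le i)).
have [i rare] : exists i, prob_in M (star_deleted i (T i)) (singleton_cuts i) * n%:R
                         <= exp eps ^+ k.
  apply: exists_rare_singleton_cut => //; first lia; first exact: ltW.
    by move=> i; exact: subsetDl.
  by move=> i; rewrite -(T_card i) card_star_deleted_complement.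
have p_half : 0 <= prob_in M (star_deleted i (T i)) (singleton_cuts i) <= 1 / 2.
  have [M_ge0 _] := cutM _ (is_graph_complete_minus (star i (T i))).
  rewrite sumr_ge0 //=; apply: le_half_of_mul_le_sqrt rare _ _ _.
  - exact: exp_star_size_sq.
  - exact/exprn_ge0/ltW/RltP/exp_pos.
  - by rewrite (ler_nat R 4); lia.
exists (star_deleted i (T i)); split; first exact: is_graph_complete_minus.
have n_gt1 : (1 < n)%N by lia.
apply: le_trans (star_deleted_expected_cost_ge cutM _ _ n_gt1 (T_sub i)).
by rewrite T_card lerD2l star_size_gain.
Qed.
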